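(* Let $G=(V,E)$ be a simple undirected graph. A vector $x\in\{0,1\}^{E^c}$ satisfies $$\sum_{f\in \textnormal{int}(C)} x_f-(|C|-3)\Big(\sum_{f\in F(C)}x_f-|F(C)|+1\Big)\ \ge 0$$ for every $C\in\mathcal{C}$ with $\textnormal{int}(C)\cap E=\emptyset$ if and only if $x\in X(G)$. Consequently the integer program of minimizing $\sum_{f\in E^c}x_f$ over such $x$ is a valid formulation of the minimum chordal completion problem: its optimal solutions are exactly the characteristic vectors of minimum-cardinality chordal completions of $G$.
   Context: $E^c=\binom{V}{2}\setminus E$. For an ordered list $C=(v_0,\ldots,v_{k-1})$ of distinct vertices of $V$: $V(C)=\{v_0,\ldots,v_{k-1}\}$, $|C|=k$, $\textnormal{ext}(C)=\{\{v_{k-1},v_0\}\}\cup\{\{v_{i-1},v_i\}:1\le i\le k-1\}$, $\textnormal{int}(C)=\binom{V(C)}{2}\setminus\textnormal{ext}(C)$, and $F(C)=\textnormal{ext}(C)\setminus E$. $\mathcal{C}$ is the family of all ordered lists of at least three distinct vertices of $V$. For $x\in\{0,1\}^{E^c}$, $E(x)=\{f\in E^c:x_f=1\}$, and $X(G)=\{x\in\{0,1\}^{E^c}: (V,E\cup E(x))\text{ is chordal}\}$, where a graph is chordal if every cycle with at least four vertices has a chord (an edge joining two nonconsecutive vertices of the cycle). A chordal completion of $G$ is a set $F\subseteq E^c$ with $(V,E\cup F)$ chordal. *)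

From mathcomp Require Import all_boot all_order all_algebra.
Set Implicit Arguments. Unset Strict Implicit. Unset Printing Implicit Defensive.

Section Graphs.
Variable V : finType.

Definition pairs : {set {set V}} := [set p : {set V} | #|p| == 2].

Definition simple_graph (E : {set {set V}}) : Prop := E \subset pairs.

Definition compl_edges (E : {set {set V}}) : {set {set V}} := pairs :\: E.

(* Index type of the vector x \in {0,1}^{E^c}. *)
Definition nonedge (E : {set {set V}}) := {p : {set V} | p \in compl_edges E}.

(* Ordered lists C = (v_0,...,v_{k-1}) of distinct vertices are uniq seqs. *)
Definition vset (C : seq V) : {set V} := [set v in C].

(* ext(C) = {{v_{k-1},v_0}} \cup {{v_{i-1},v_i} : 1 <= i <= k-1} *)
Definition ext (C : seq V) : {set {set V}} :=
  [set [set p.1; p.2] | p in zip C (rot 1 C)].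

Definition int_ (C : seq V) : {set {set V}} :=
  [set p in pairs | p \subset vset C] :\: ext C.

Definition Fc (E : {set {set V}}) (C : seq V) : {set {set V}} := ext C :\: E.

Definition chordal (H : {set {set V}}) : Prop :=
  forall C : seq V, uniq C -> 4 <= size C -> ext C \subset H ->
    exists2 f, f \in int_ C & f \in H.

Definition Ex (E : {set {set V}}) (x : nonedge E -> bool) : {set {set V}} :=
  [set val f | f in [pred f : nonedge E | x f]].

Definition in_XG (E : {set {set V}}) (x : nonedge E -> bool) : Prop :=
  chordal (E :|: Ex x).

Definition chordal_completion (E F : {set {set V}}) : Prop :=
  F \subset compl_edges E /\ chordal (E :|: F).

Definition min_chordal_completion (E F : {set {set V}}) : Prop :=
  chordal_completion E F /\
  forall F', chordal_completion E F' -> #|F| <= #|F'|.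

Local Open Scope ring_scope.

Definition cycle_ineq (E : {set {set V}}) (x : nonedge E -> bool) (C : seq V)
  : Prop :=
  0 <= (\sum_(f : nonedge E | val f \in int_ C) (x f : nat)%:Z)
       - ((size C)%:Z - 3) *
         ((\sum_(f : nonedge E | val f \in Fc E C) (x f : nat)%:Z)
          - (#|Fc E C|)%:Z + 1).

Definition feasible (E : {set {set V}}) (x : nonedge E -> bool) : Prop :=
  forall C : seq V, uniq C -> (3 <= size C)%N -> int_ C :&: E = set0 ->
    cycle_ineq x C.

Definition objective (E : {set {set V}}) (x : nonedge E -> bool) : nat :=
  (\sum_(f : nonedge E) (x f : nat))%N.

End Graphs.

From mathcomp Require Import all_boot all_order all_algebra.
From mathcomp Require Import zify.
Set Implicit Arguments. Unset Strict Implicit. Unset Printing Implicit Defensive.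
Import GRing.Theory.

(* In a graph H, a chord uv of a cycle C with ext C in H splits C into two
   shorter cycles C1, C2 whose chord sets are disjoint, contained in that of C
   and avoid uv.  By induction, if H is chordal then C has at least
   (|C1| - 3) + (|C2| - 3) + 1 = |C| - 3 chords in H.
   If F(C) is not contained in E(x), the last factor of the inequality of C
   is nonpositive and the inequality holds trivially.  Otherwise ext C lies in
   E ∪ E(x) and, as int(C) meets no edge of E, the inequality says exactly
   that C has |C| - 3 chords in E ∪ E(x): this is true when E ∪ E(x) is
   chordal, and false for a chordless cycle of length at least 4.  Finally the
   objective of x is |E(x)|. *)

Lemma imset_nil (T U : finType) (f : T -> U) : [set f p | p in [::]] = set0.
Proof. by apply/setP => y; rewrite inE; apply/imsetP => -[]. Qed.

Lemma imset_cons (T U : finType) (f : T -> U) p s :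
  [set f q | q in p :: s] = f p |: [set f q | q in s].
Proof.
apply/setP => y; rewrite in_setU1; apply/imsetP/predU1P.
- by case=> q; rewrite inE => /predU1P[-> | qs] ->; [left | right; apply: imset_f].
- by case=> [-> | /imsetP[q qs ->]]; [exists p | exists q]; rewrite ?inE ?eqxx ?qs ?orbT.
Qed.

Section CycleEdges.
Variable V : finType.
Implicit Types (x y u v : V) (s a b C : seq V) (H : {set {set V}}).

Fixpoint path_edges x s : {set {set V}} :=
  if s is y :: s' then [set x; y] |: path_edges y s' else set0.

Lemma path_edges_cat x s y t :
  path_edges x (s ++ y :: t) = path_edges x (rcons s y) :|: path_edges y t.
Proof. by elim: s x => [|z s IH] x /=; rewrite ?setU0 ?IH ?setUA. Qed.

Lemma path_edges_rcons x s y :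
  path_edges x (rcons s y) = path_edges x s :|: [set [set last x s; y]].
Proof. by elim: s x => [|z s IH] x /=; rewrite ?setU0 ?set0U ?IH ?setUA. Qed.

Lemma path_edges_meet x s y e :
  s != [::] -> e \in path_edges x (rcons s y) -> exists2 z, z \in s & z \in e.
Proof.
elim: s x => // z s IH x _ /=; rewrite in_setU1 => /predU1P[-> | ].
  by exists z; rewrite !inE eqxx ?orbT.
case: (eqVneq s [::]) => [-> | /IH hs /hs[w ws we]].
  by rewrite /= setU0 inE => /eqP->; exists z; rewrite !inE eqxx.
by exists w; rewrite // inE ws orbT.
Qed.

Lemma path_edges_zip x s z :
  [set [set p.1; p.2] | p in zip (x :: s) (rcons s z)] = path_edges x (rcons s z).
Proof.
elim: s x => [|y s IH] x /=; first by rewrite imset_cons imset_nil setU0.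
by rewrite imset_cons IH.
Qed.

Lemma ext_cons x s : ext (x :: s) = path_edges x (rcons s x).
Proof. by rewrite /ext rot1_cons path_edges_zip. Qed.

Lemma ext_rcons x s y :
  ext (x :: rcons s y) = path_edges x (rcons s y) :|: [set [set y; x]].
Proof. by rewrite ext_cons path_edges_rcons last_rcons. Qed.

Lemma ext_cycle_cat u a v b :
  ext (u :: a ++ v :: b) = path_edges u (rcons a v) :|: path_edges v (rcons b u).
Proof. by rewrite ext_cons rcons_cat /= path_edges_cat. Qed.

Lemma ext_rot1 C : ext (rot 1 C) = ext C.
Proof.
by case: C => [|x [|y s]] //; rewrite rot1_cons /= ext_rcons ext_cons /= setUC.
Qed.

Lemma ext_rot n C : ext (rot n C) = ext C.
Proof.
elim: n => [|n IH]; first by rewrite rot0.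
have [lt_nC | le_Cn] := ltnP n (size C); first by rewrite rotS // ext_rot1.
by rewrite rot_oversize // ltnW.
Qed.

Lemma vset_rot n C : vset (rot n C) = vset C.
Proof. by apply/setP => z; rewrite !inE mem_rot. Qed.

Lemma int_rot n C : int_ (rot n C) = int_ C.
Proof. by rewrite /int_ ext_rot vset_rot. Qed.

Lemma in_int e C :
  (e \in int_ C) = [&& e \in pairs V, e \subset vset C & e \notin ext C].
Proof. by rewrite !inE andbC andbA. Qed.

Lemma rot_cycle_cat u a v b : rot (size a).+1 (u :: a ++ v :: b) = v :: b ++ u :: a.
Proof. by rewrite -cat_cons (rot_size_cat (u :: a)). Qed.

Lemma chord_notin_int_arc u a v : [set u; v] \notin int_ (u :: rcons a v).
Proof. by rewrite in_int ext_rcons !inE setUC eqxx orbT /= !andbF. Qed.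

Section ChordArc.
Variables (u v : V) (a b : seq V).
Hypotheses (uniqC : uniq (u :: a ++ v :: b))
           (chordC : [set u; v] \in int_ (u :: a ++ v :: b)).

Let cycle_arc_cat : u :: a ++ v :: b = (u :: rcons a v) ++ b.
Proof. by rewrite /= cat_rcons. Qed.

Lemma chord_arcs_nonempty : a != [::] /\ b != [::].
Proof.
move: chordC; rewrite in_int ext_cycle_cat => /and3P[_ _ not_ext].
split; apply/eqP => nil_arc; move: not_ext; rewrite nil_arc /=.
- by rewrite !inE eqxx.
- by rewrite [[set v; u]]setUC !inE eqxx orbT.
Qed.

Lemma size_arc : 3 <= size (u :: rcons a v) < size (u :: a ++ v :: b).
Proof.
case: chord_arcs_nonempty; rewrite -!size_eq0 /= size_rcons size_cat /=; lia.
Qed.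

Lemma uniq_arc : uniq (u :: rcons a v).
Proof. by move: uniqC; rewrite cycle_arc_cat cat_uniq => /andP[]. Qed.

Lemma int_arc_sub : int_ (u :: rcons a v) \subset int_ (u :: a ++ v :: b).
Proof.
apply/subsetP => e; rewrite !in_int ext_rcons ext_cycle_cat !inE.
case/and3P => -> sub_e /norP[not_arc _] /=.
have sub_vset : vset (u :: rcons a v) \subset vset (u :: a ++ v :: b).
  apply/subsetP => z; rewrite cycle_arc_cat !inE mem_cat.
  by case/orP=> [-> | ->]; rewrite ?orbT.
rewrite (subset_trans sub_e sub_vset) (negbTE not_arc) /=.
apply/negP => /(path_edges_meet chord_arcs_nonempty.2) [z zb ze].
move: uniqC; rewrite cycle_arc_cat cat_uniq => /and3P[_ /hasPn /(_ z zb)].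
by have := subsetP sub_e z ze; rewrite inE => ->.
Qed.

Lemma vset_arcs : vset (u :: rcons a v) :&: vset (v :: rcons b u) \subset [set u; v].
Proof.
apply/subsetP => z; rewrite !inE !mem_rcons !inE.
case/andP => /or3P[-> | -> | za] zr; rewrite ?orbT //.
move: uniqC; rewrite /= cat_uniq => /andP[_ /and3P[_ /hasPn /(_ z) nab _]].
case/or3P: zr => [-> | -> | zb]; rewrite ?orbT //.
by move: za; rewrite (negPf (nab _)) // inE zb orbT.
Qed.

Lemma int_arcs_disjoint : [disjoint int_ (u :: rcons a v) & int_ (v :: rcons b u)].
Proof.
apply/pred0P => e /=; apply/negP => /andP[].
rewrite !in_int => /and3P[pair_e sub1 not_ext1] /and3P[_ sub2 _].
have e_uv : e = [set u; v].
  apply/eqP; rewrite eqEcard (subset_trans _ vset_arcs) ?subsetI ?sub1 ?sub2 //.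
  by move: pair_e; rewrite inE cards2 => /eqP->; case: (u != v).
by move: not_ext1; rewrite e_uv ext_rcons !inE setUC eqxx orbT.
Qed.

End ChordArc.

Lemma chord_swap u a v b :
  uniq (u :: a ++ v :: b) -> [set u; v] \in int_ (u :: a ++ v :: b) ->
  uniq (v :: b ++ u :: a) /\ [set v; u] \in int_ (v :: b ++ u :: a).
Proof. by rewrite -rot_cycle_cat rot_uniq int_rot setUC. Qed.

Lemma card_int_chord_split H u a v b :
    uniq (u :: a ++ v :: b) -> [set u; v] \in int_ (u :: a ++ v :: b) ->
    [set u; v] \in H ->
  #|int_ (u :: rcons a v) :&: H| + #|int_ (v :: rcons b u) :&: H|
    < #|int_ (u :: a ++ v :: b) :&: H|.
Proof.
move=> uniqC chordC chordH; have [uniqC' chordC'] := chord_swap uniqC chordC.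
have int_arc1 := int_arc_sub uniqC chordC.
have int_arc2 : int_ (v :: rcons b u) \subset int_ (u :: a ++ v :: b).
  by have := int_arc_sub uniqC' chordC'; rewrite -rot_cycle_cat int_rot.
have disj : [disjoint int_ (u :: rcons a v) :&: H & int_ (v :: rcons b u) :&: H].
  exact: disjointW (subsetIl _ _) (subsetIl _ _) (int_arcs_disjoint uniqC).
have chord_new : [set u; v] \notin
    (int_ (u :: rcons a v) :&: H) :|: (int_ (v :: rcons b u) :&: H).
  rewrite in_setU !in_setI (negbTE (chord_notin_int_arc u a v)) /=.
  by rewrite [[set u; v]]setUC (negbTE (chord_notin_int_arc v b u)).
have sub : [set u; v] |: ((int_ (u :: rcons a v) :&: H) :|: (int_ (v :: rcons b u) :&: H))
    \subset int_ (u :: a ++ v :: b) :&: H.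
  by rewrite subUset sub1set in_setI chordC chordH subUset !setSI.
have := subset_leq_card sub.
by rewrite cardsU1 chord_new cardsU (disjoint_setI0 disj) cards0 subn0.
Qed.

Lemma ext_arc_subset H u a v b :
  [set u; v] \in H -> ext (u :: a ++ v :: b) \subset H -> ext (u :: rcons a v) \subset H.
Proof.
move=> chordH extH; apply/subsetP => e; rewrite ext_rcons !inE.
case/orP=> [e_arc | /eqP->]; last by rewrite setUC.
by apply: (subsetP extH); rewrite ext_cycle_cat inE e_arc.
Qed.

Lemma chord_rot_split C e :
  e \in int_ C -> exists u w a b i, e = [set u; w] /\ rot i C = u :: a ++ w :: b.
Proof.
rewrite in_int inE => /and3P[/cards2P[u [w [neq_uw ->]]] sub_uw _].
have uC : u \in C by have := subsetP sub_uw u (set21 u w); rewrite inE.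
have wC : w \in C by have := subsetP sub_uw w (set22 u w); rewrite inE.
case: (rot_to uC) => i s rotC.
have ws : w \in s by rewrite -(mem_rot i) rotC inE eq_sym (negbTE neq_uw) in wC.
by case/splitPr: ws rotC => a b rotC; exists u, w, a, b, i.
Qed.

Lemma chordal_card_int H C :
  chordal H -> uniq C -> 3 <= size C -> ext C \subset H ->
  size C - 3 <= #|int_ C :&: H|.
Proof.
move=> chH; have [n] := ubnP (size C); elim: n C => // n IH C.
rewrite ltnS => le_Cn uniqC ge3 extH.
have [lt4 | ge4] := ltnP (size C) 4; first by have -> : size C - 3 = 0 by lia.
have [f intf Hf] := chH C uniqC ge4 extH.
have [u [w [a [b [i [def_f rotC]]]]]] := chord_rot_split intf; subst f.
move: le_Cn uniqC extH intf.
rewrite -(size_rot i) -(rot_uniq i) -(ext_rot i) -(int_rot i) rotC.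
move=> le_Cn uniqC extH chordC; have [uniqC' chordC'] := chord_swap uniqC chordC.
have IH1 : size (u :: rcons a w) - 3 <= #|int_ (u :: rcons a w) :&: H|.
  case/andP: (size_arc uniqC chordC) => ge3' lt_C'.
  apply: IH => //; first exact: leq_trans lt_C' le_Cn.
    exact: uniq_arc uniqC.
  exact: ext_arc_subset Hf extH.
have IH2 : size (w :: rcons b u) - 3 <= #|int_ (w :: rcons b u) :&: H|.
  case/andP: (size_arc uniqC' chordC') => ge3' lt_C'.
  apply: IH => //.
  - by apply: leq_trans lt_C' _; rewrite -rot_cycle_cat size_rot.
  - exact: uniq_arc uniqC'.
  - by apply: (@ext_arc_subset H w b u a); rewrite 1?setUC // -rot_cycle_cat ext_rot.
have := card_int_chord_split uniqC chordC Hf.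
case/andP: (size_arc uniqC chordC); case/andP: (size_arc uniqC' chordC').
move: IH1 IH2; rewrite /= !size_rcons !size_cat /=; lia.
Qed.

End CycleEdges.

Section CycleInequality.
Variables (V : finType) (E : {set {set V}}).
Implicit Types (x : nonedge E -> bool) (S : {set {set V}}).

Lemma sum_nonedges_card x (P : pred (nonedge E)) :
  (\sum_(f | P f) x f)%N = #|[set f | P f && x f]|.
Proof. by rewrite -sum1dep_card big_mkcondr; apply: eq_bigr => f _; case: (x f). Qed.

Lemma card_Ex x : #|Ex x| = #|[set f | x f]|.
Proof. by rewrite (card_imset _ val_inj) cardsE. Qed.

Lemma card_setI_Ex x S : #|S :&: Ex x| = #|[set f : nonedge E | (val f \in S) && x f]|.
Proof.
rewrite -[RHS](card_imset _ val_inj); apply: eq_card => e; rewrite in_setI.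
apply/andP/imsetP => [[eS /imsetP[f xf ef]] | [f]].
  by exists f; rewrite // inE -ef eS.
by rewrite inE => /andP[fS xf] ->; split; last exact: imset_f.
Qed.

Lemma objective_card x : objective x = #|Ex x|.
Proof. by rewrite /objective sum_nonedges_card card_Ex. Qed.

Lemma sum_nonedges_in x S :
  (\sum_(f : nonedge E | val f \in S) (x f : nat)%:Z = #|S :&: Ex x|%:Z)%R.
Proof.
under eq_bigr do rewrite -natz.
by rewrite -natr_sum natz sum_nonedges_card card_setI_Ex.
Qed.

Lemma cycle_ineqE x C : 3 <= size C ->
  cycle_ineq x C <-> (Fc E C \subset Ex x -> size C - 3 <= #|int_ C :&: Ex x|).
Proof.
move=> ge3; rewrite /cycle_ineq !sum_nonedges_in.
have [FEx | notFEx] := boolP (Fc E C \subset Ex x).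
  by rewrite (setIidPl FEx); split=> [le0 _ | /(_ isT)]; lia.
have : #|Fc E C :&: Ex x| < #|Fc E C|.
  by rewrite proper_card // properE subsetIl subsetI subxx.
by split=> // _; nia.
Qed.

Lemma feasibleP x : feasible x <-> in_XG x.
Proof.
split=> [feas C uniqC ge4 extH | chH C uniqC ge3 intE].
  case: (set_0Vmem (int_ C :&: (E :|: Ex x))) => [no_chord | [f]].
    have ge3 := ltnW ge4.
    have [intE intEx] : int_ C :&: E = set0 /\ int_ C :&: Ex x = set0.
      by split; apply/eqP; rewrite -subset0 -no_chord setIS // (subsetUl, subsetUr).
    move/(cycle_ineqE x ge3): (feas C uniqC ge3 intE).
    by rewrite /Fc subDset extH intEx cards0 => /(_ isT); lia.
  by rewrite inE => /andP[]; exists f.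
rewrite cycle_ineqE // /Fc subDset => extH.
by have := chordal_card_int chH uniqC ge3 extH; rewrite setIUr intE set0U.
Qed.

Lemma Ex_subset x : Ex x \subset compl_edges E.
Proof. by apply/subsetP => e /imsetP[f _ ->]; exact: valP. Qed.

Lemma Ex_indicator (F : {set {set V}}) :
  F \subset compl_edges E -> Ex (fun f : nonedge E => val f \in F) = F.
Proof.
move=> FE; apply/setP => e; apply/imsetP/idP => [[f] | eF]; first by rewrite inE => fF ->.
by exists (exist _ e (subsetP FE e eF)).
Qed.

Lemma chordal_completion_Ex x : chordal_completion E (Ex x) <-> feasible x.
Proof. by rewrite feasibleP; split=> [[] | ] //; split=> //; exact: Ex_subset. Qed.

End CycleInequality.

Theorem proposition1 (V : finType) (E : {set {set V}}) (hE : simple_graph E) :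
  (forall x : nonedge E -> bool, feasible x <-> in_XG x) /\
  (forall x : nonedge E -> bool,
     (feasible x /\ forall y : nonedge E -> bool, feasible y ->
        (objective x <= objective y)%N)
     <-> min_chordal_completion E (Ex x)).
Proof.
(* The argument never uses that E consists of pairs. *)
split=> [|x]; first exact: feasibleP.
split=> [[feas x_min] | [cx x_min]].
  split=> [|F [FE chF]]; first exact/chordal_completion_Ex.
  have feasF : feasible (fun f : nonedge E => val f \in F).
    by apply/chordal_completion_Ex; rewrite Ex_indicator.
  by have := x_min _ feasF; rewrite !objective_card Ex_indicator.
split; first exact/chordal_completion_Ex.
by move=> y /chordal_completion_Ex cy; rewrite !objective_card; exact: x_min.
Qed.
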